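(* Let $r>0$ and $t\ge1$ be real numbers, and set $p=\lceil tr\rceil-\lceil r\rceil$ and $q=\lceil r\rceil-1$. Consider any nonincreasing sequence of nonnegative reals $$t-1,\ a_1,a_2,\dots,a_p,\ b_1,b_2,\dots,b_q$$ (of total length $\lceil tr\rceil$) in which $a_1,\dots,a_p$ is an arithmetic progression with common difference $-1/r$. If $t-1-a_1\le 1/r$ (a condition that is vacuous when $p=0$), then the average of the entire sequence is at least $\frac{t-2+1/t}{2}$. *)

From mathcomp Require Import all_boot all_order all_algebra.
From mathcomp Require Import reals.
Set Implicit Arguments. Unset Strict Implicit. Unset Printing Implicit Defensive.
Import Order.TTheory GRing.Theory Num.Theory.
Local Open Scope ring_scope.

(* The sequence  t-1, a_1, ..., a_p, b_1, ..., b_q  (a_i is [a (i-1)], b_j is [b (j-1)]). *)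
Definition the_seq (R : realType) (t : R) (a b : nat -> R) (p q : nat) : seq R :=
  (t - 1) :: [seq a i | i <- iota 0 p] ++ [seq b j | j <- iota 0 q].

Definition avg (R : realType) (s : seq R) : R :=
  (\sum_(x <- s) x) / (size s)%:R.

(* Write x = t - 1 and m = floor (x r).  Since x r + r = t r, the progression
   has at least m terms, and its k-th term is at least x - k/r, so the sum of the
   whole sequence is at least x + m x - m (m + 1) / (2 r).  Because m <= x r <= m + 1,
   this is at least (r x^2 + x) / 2, while the length of the sequence is
   ceil (t r) < t r + 1; dividing, and using x^2 / t <= x, gives x^2 / (2 t). *)
From mathcomp Require Import all_boot all_order all_algebra.
From mathcomp Require Import reals.
From mathcomp Require Import zify ring lra.
Set Implicit Arguments. Unset Strict Implicit. Unset Printing Implicit Defensive.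
Import Order.TTheory GRing.Theory Num.Theory.
Local Open Scope ring_scope.

Section ArithmeticProgression.
Variables (R : numDomainType) (a : nat -> R) (d : R) (p : nat).
Hypothesis a_step : forall i, (i.+1 < p)%N -> a i.+1 = a i - d.

Lemma arith_progE i : (i < p)%N -> a i = a 0%N - d *+ i.
Proof.
elim: i => [|i IH] ip; first by rewrite mulr0n subr0.
by rewrite a_step // IH ?(ltnW ip) // mulrSr opprD addrA.
Qed.

Lemma arith_prog_ge x i : x - a 0%N <= d -> (i < p)%N -> x - d *+ i.+1 <= a i.
Proof.
move=> a0_ge ip; rewrite arith_progE // mulrSr opprD addrA lerBlDr addrAC.
by rewrite lerD2r -lerBlDl.
Qed.

End ArithmeticProgression.

Lemma sum_iota_sub_mulrn (R : numFieldType) (x d : R) (m : nat) :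
  \sum_(i <- iota 0 m) (x - d *+ i.+1) = m%:R * x - d * (m * m.+1)%:R / 2.
Proof.
elim: m => [|m IH]; first by rewrite big_nil mul0r mul0n mulr0 mul0r subr0.
rewrite -addn1 iotaD big_cat /= big_seq1 IH add0n -mulr_natr !natrD !natrM !natrD.
by field.
Qed.

Lemma sum_prefix_le (R : numDomainType) (f a : nat -> R) (m p : nat) :
  (m <= p)%N -> (forall i, (i < p)%N -> 0 <= a i) ->
  (forall i, (i < m)%N -> f i <= a i) ->
  \sum_(i <- iota 0 m) f i <= \sum_(i <- iota 0 p) a i.
Proof.
move=> mp a_ge0 fa; rewrite -(subnKC mp) iotaD big_cat /= add0n -[leLHS]addr0.
apply: lerD.
  rewrite !big_seq; apply: ler_sum => i; rewrite mem_iota add0n => /andP[_].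
  exact: fa.
rewrite big_seq; apply: sumr_ge0 => i; rewrite mem_iota subnKC // => /andP[_].
exact: a_ge0.
Qed.

Lemma truncnD_ceil_le (R : archiRealFieldType) (y z : R) :
  0 <= y -> ((Num.truncn y)%:Z + Num.ceil z <= Num.ceil (y + z))%R.
Proof.
move=> y_ge0; suff : ((Num.truncn y)%:Z + Num.ceil z - 1 < Num.ceil (y + z))%R.
  by lia.
rewrite ceil_gt_int rmorphB rmorphD /= -pmulrn rmorph1.
have := truncn_le y; have := ceilB1_lt z; rewrite y_ge0 rmorphB rmorph1 /=.
lra.
Qed.

(* Multiplied by r, this is (x r - m) (m + 1 - x r) >= 0. *)
Lemma floor_quadratic_bound (R : realFieldType) (x r : R) (m : nat) :
  0 < r -> m%:R <= x * r <= m%:R + 1 ->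
  r * x ^+ 2 + x <= 2 * (x + (m%:R * x - 1 / r * (m * m.+1)%:R / 2)).
Proof.
move=> r_gt0 /andP[m_le m_ge]; rewrite -(ler_pM2l r_gt0).
have : 0 <= (x * r - m%:R) * (m%:R + 1 - x * r) by apply: mulr_ge0; lra.
have -> : r * (2 * (x + (m%:R * x - 1 / r * (m * m.+1)%:R / 2)))
        = 2 * r * x + 2 * r * m%:R * x - m%:R * (m%:R + 1).
  by rewrite natrM -addn1 natrD; field; rewrite gt_eqF.
set y := x * r; have -> : r * (r * x ^+ 2 + x) = y ^+ 2 + y by rewrite /y; ring.
have -> : 2 * r * x + 2 * r * m%:R * x = 2 * y + 2 * m%:R * y by rewrite /y; ring.
nra.
Qed.

Lemma avg_bound (R : realFieldType) (t r S : R) (N : nat) :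
  1 <= t -> 0 < r -> (0 < N)%N -> N%:R <= t * r + 1 ->
  r * (t - 1) ^+ 2 + (t - 1) <= 2 * S ->
  (t - 2 + 1 / t) / 2 <= S / N%:R.
Proof.
move=> t_ge1 r_gt0 N_gt0 N_le S_ge; have t_gt0 : 0 < t by lra.
rewrite ler_pdivlMr ?ltr0n //.
have -> : t - 2 + 1 / t = (t - 1) ^+ 2 / t by field; rewrite gt_eqF.
set c := (t - 1) ^+ 2 / t.
have c_ge0 : 0 <= c by rewrite divr_ge0 ?sqr_ge0 ?ltW.
have c_le : c <= t - 1 by rewrite ler_pdivrMr // expr2 ler_wpM2l; lra.
have cN : c * N%:R <= r * (t - 1) ^+ 2 + c.
  have -> : r * (t - 1) ^+ 2 + c = c * (t * r + 1).
    by rewrite /c; field; rewrite gt_eqF.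
  exact: ler_wpM2l.
rewrite mulrAC ler_pdivrMr; lra.
Qed.

Lemma size_the_seq (R : realType) (t : R) (a b : nat -> R) (p q : nat) :
  size (the_seq t a b p q) = (p + q).+1.
Proof. by rewrite /= size_cat !size_map !size_iota. Qed.

Lemma sum_the_seq (R : realType) (t : R) (a b : nat -> R) (p q : nat) :
  \sum_(x <- the_seq t a b p q) x
    = t - 1 + \sum_(i <- iota 0 p) a i + \sum_(j <- iota 0 q) b j.
Proof. by rewrite /the_seq big_cons big_cat !big_map addrA. Qed.

Theorem mainTheorem16 (R : realType) (r t : R) (p q : nat) (a b : nat -> R) :
  0 < r -> 1 <= t ->
  p%:Z = Num.ceil (t * r) - Num.ceil r ->
  q%:Z = Num.ceil r - 1 ->
  sorted (fun x y => y <= x) (the_seq t a b p q) ->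
  all (fun x => 0 <= x) (the_seq t a b p q) ->
  (forall i : nat, (i.+1 < p)%N -> a i.+1 = a i - 1 / r) ->
  ((0 < p)%N -> t - 1 - a 0%N <= 1 / r) ->
  (t - 2 + 1 / t) / 2 <= avg (the_seq t a b p q).
Proof.
move=> r_gt0 t_ge1 p_def q_def _ + a_step a0_le.
rewrite /= all_cat !all_map => /and3P[_ /allP a_ge0 /allP b_ge0].
set x := t - 1; set m := Num.truncn (x * r).
have xr_ge0 : 0 <= x * r by rewrite mulr_ge0 // /x; lra.
have /andP[m_le m_gt] := truncn_itv xr_ge0.
have m_le_p : (m <= p)%N.
  have := truncnD_ceil_le r xr_ge0.
  have -> : x * r + r = t * r by rewrite /x; ring.
  by rewrite -lez_nat p_def lerBrDr.
have N_le : (p + q).+1%:R <= t * r + 1.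
  have N_def : (p + q).+1%:Z = Num.ceil (t * r).
    by rewrite -addn1 !PoszD p_def q_def; ring.
  by have := ceilB1_lt (t * r); rewrite -N_def rmorphB rmorph1 /=; lra.
have sum_a : m%:R * x - 1 / r * (m * m.+1)%:R / 2 <= \sum_(i <- iota 0 p) a i.
  rewrite -sum_iota_sub_mulrn; apply: sum_prefix_le => // [i ip|i im].
    by apply: a_ge0; rewrite mem_iota.
  have ip := leq_trans im m_le_p.
  exact: arith_prog_ge a_step _ _ (a0_le (leq_ltn_trans (leq0n i) ip)) ip.
have sum_b : 0 <= \sum_(j <- iota 0 q) b j.
  by rewrite big_seq; apply: sumr_ge0 => j /b_ge0.
have quad : r * x ^+ 2 + x <= 2 * (x + (m%:R * x - 1 / r * (m * m.+1)%:R / 2)).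
  by apply: floor_quadratic_bound; rewrite // m_le natr1 ltW.
rewrite /avg size_the_seq sum_the_seq; apply: (avg_bound t_ge1 r_gt0) => //.
rewrite -/x; lra.
Qed.
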